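(* Let $\mu$ be an infinite cardinal, $\langle\mathbb{Q}_i:i\in I\rangle$ a sequence of posets such that each $\mathbb{Q}_i=\bigcup_{\zeta<\mu}Q_{i,\zeta}$ with each $Q_{i,\zeta}$ an $\mathrm{Fr}$-linked subset of $\mathbb{Q}_i$, and let $\mathbb{P}$ be the finite support product of $\langle\mathbb{Q}_i:i\in I\rangle$. Assume (i) $|I|\leq 2^\mu$, and (ii) for every finite $u\subseteq I$ and every $s:u\to\mu$, $\prod_{i\in u}Q_{i,s(i)}$ is $\mathrm{Fr}$-linked in $\prod_{i\in u}\mathbb{Q}_i$. Then $\mathbb{P}$ is $\mu$-$\mathrm{Fr}$-linked.
   Context: For a poset $\mathbb{P}$ and $\bar p=\langle p_n:n<\omega\rangle$ in $\mathbb{P}$, $\dot W(\bar p)$ names $\{n:p_n\in\dot G\}$. $Q\subseteq\mathbb{P}$ is $\mathrm{Fr}$-linked if for every sequence $\bar p$ in $Q$ some $q\in\mathbb{P}$ forces $\dot W(\bar p)$ infinite. $\mathbb{P}$ is $\mu$-$\mathrm{Fr}$-linked if it is a union of $\mu$ many $\mathrm{Fr}$-linked subsets. *)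

From Stdlib Require Import List Arith.
Set Implicit Arguments.

(* A forcing notion: a preorder (le p q = "p is stronger than q") with a top 1. *)
Unset Implicit Arguments.
Record forcing := Forcing {
  carrier :> Type;
  fle : carrier -> carrier -> Prop;
  ftop : carrier;
  fle_refl : forall p, fle p p;
  fle_trans : forall p q r, fle p q -> fle q r -> fle p r;
  fle_top : forall p, fle p ftop
}.
Arguments fle {f} _ _.
Arguments ftop f : assert.
Set Implicit Arguments.

Definition finite_sub (T : Type) (A : T -> Prop) : Prop :=
  exists l : list T, forall x, A x -> In x l.

(* q forces that W(pbar) = {n | pbar n \in G} is infinite:
   for every m, the set of conditions below some pbar n with n >= m is dense below q. *)
Definition forces_W_infinite {P : forcing} (q : P) (pbar : nat -> P) : Prop :=
  forall m (r : P), fle r q ->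
    exists n (r' : P), m <= n /\ fle r' r /\ fle r' (pbar n).

Definition Fr_linked {P : forcing} (Q : P -> Prop) : Prop :=
  forall pbar : nat -> P, (forall n, Q (pbar n)) ->
    exists q : P, forces_W_infinite q pbar.

(* P is mu-Fr-linked, mu given as the cardinality of the type M *)
Definition mu_Fr_linked (M : Type) (P : forcing) : Prop :=
  exists F : M -> P -> Prop,
    (forall z, Fr_linked (F z)) /\ (forall p : P, exists z, F z p).

Section FSProd.
Variables (I : Type) (Q : I -> forcing).

Definition fsp_carrier :=
  { f : forall i, Q i | finite_sub (fun i => f i <> ftop (Q i)) }.

Definition fsp_le (f g : fsp_carrier) : Prop :=
  forall i, fle (proj1_sig f i) (proj1_sig g i).

Lemma fsp_top_fin : finite_sub (fun i => (fun i => ftop (Q i)) i <> ftop (Q i)).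
Proof. exists nil; intros x H; now elim H. Qed.

Definition fsp_top : fsp_carrier := exist _ (fun i => ftop (Q i)) fsp_top_fin.

Lemma fsp_le_refl : forall p, fsp_le p p.
Proof. intros p i; apply fle_refl. Qed.

Lemma fsp_le_trans : forall p q r, fsp_le p q -> fsp_le q r -> fsp_le p r.
Proof. intros p q r H1 H2 i; eapply fle_trans; eauto. Qed.

Lemma fsp_le_top : forall p, fsp_le p fsp_top.
Proof. intros p i; apply fle_top. Qed.

Definition fs_prod : forcing :=
  @Forcing fsp_carrier fsp_le fsp_top fsp_le_refl fsp_le_trans fsp_le_top.
End FSProd.

From Stdlib Require Import List Arith Lia Classical ClassicalEpsilon FunctionalExtensionality.
From Stdlib Require Import Cantor FinFun.
From mathcomp Require boolp classical_sets.
Set Implicit Arguments.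

(* Index the pieces by a bound k on the size of supports and a choice h : I -> M of pieces of
   the factors: P_{k,h} consists of the conditions whose support has at most k points, at
   each of which they lie in Q_{i, h i}.  P_{k,h} is Fr-linked: a sequence in it has a
   subsequence whose supports form a Delta-system with root r; hypothesis (ii) on r yields
   q, and a condition below q meets the supports of almost all later terms only inside r,
   so it can be amalgamated with them.  Only mu many h are needed: as |I| <= 2^mu, finitely
   many points of M separate any finite u in I, so every s : u -> M is the restriction of a
   function given by a finite table over M, and such tables are coded in M because
   mu * mu = mu, which follows from Zorn's lemma. *)

(** * Zorn's lemma and comparability of cardinals *)

Lemma zorn_nonempty_chains (T : Type) (t0 : T) (R : T -> T -> Prop) :
  (forall t, R t t) -> (forall r s t, R r s -> R s t -> R r t) ->
  (forall C : T -> Prop, (exists c, C c) -> (forall s t, C s -> C t -> R s t \/ R t s) ->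
     exists u, forall s, C s -> R s u) ->
  exists t, forall s, R t s -> R s t.
Proof.
  intros Rrefl Rtrans Hchain.
  destruct (classical_sets.ZL_preorder t0 (R := fun s t => boolp.asbool (R s t))) as [t Ht].
  - intros t; apply boolp.asboolT, Rrefl.
  - intros r s t Hrs Hst; apply boolp.asboolT.
    apply (Rtrans r s t); apply boolp.asboolW; assumption.
  - intros C HC. destruct (classic (exists c, C c)) as [Hne|Hempty].
    + destruct (Hchain C Hne) as [u Hu].
      { intros s t Cs Ct. destruct (HC s t Cs Ct); [left|right]; apply boolp.asboolW; assumption. }
      exists u; intros s Cs; apply boolp.asboolT, Hu, Cs.
    + exists t0; intros s Cs; exfalso; eauto.
  - exists t; intros s Hts. apply boolp.asboolW, Ht, boolp.asboolT, Hts.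
Qed.

Lemma chain_common_upper (T : Type) (R : T -> T -> Prop) (C : T -> Prop) :
  (forall t, R t t) -> (forall s t, C s -> C t -> R s t \/ R t s) ->
  forall x y, C x -> C y -> exists z, C z /\ R x z /\ R y z.
Proof.
  intros Rrefl Hchain x y Cx Cy.
  destruct (Hchain x y Cx Cy); [exists y | exists x]; auto.
Qed.

Definition embeds_on {X Y : Type} (A : X -> Prop) (B : Y -> Prop) (f : X -> Y) : Prop :=
  (forall x, A x -> B (f x)) /\ (forall x x', A x -> A x' -> f x = f x' -> x = x').

Record partial_injection (X Y : Type) (A : X -> Prop) (B : Y -> Prop) (R : X -> Y -> Prop) :
  Prop := {
  pinj_sub : forall x y, R x y -> A x /\ B y;
  pinj_fun : forall x y y', R x y -> R x y' -> y = y';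
  pinj_inj : forall x x' y, R x y -> R x' y -> x = x' }.

Lemma partial_injection_flip (X Y : Type) (A : X -> Prop) (B : Y -> Prop) (R : X -> Y -> Prop) :
  partial_injection A B R -> partial_injection B A (fun y x => R x y).
Proof.
  intros HR; split.
  - intros y x Hxy. apply and_comm, (pinj_sub HR _ _ Hxy).
  - intros y x x'; apply (pinj_inj HR).
  - intros y y' x; apply (pinj_fun HR).
Qed.

Lemma partial_injection_onto (X Y : Type) (A : X -> Prop) (B : Y -> Prop) (R : X -> Y -> Prop)
  (x0 : X) :
  partial_injection A B R -> (forall y, B y -> exists x, R x y) ->
  exists f, embeds_on B A f.
Proof.
  intros HR Hsurj.
  pose (f := fun y => epsilon (inhabits x0) (fun x => R x y)).
  assert (Hf : forall y, B y -> R (f y) y) by (intros y By; apply epsilon_spec, Hsurj, By).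
  exists f; split.
  - intros y By. exact (proj1 (pinj_sub HR _ _ (Hf y By))).
  - intros y y' By By' E.
    apply (pinj_fun HR (f y)); [apply Hf, By|]. rewrite E. apply Hf, By'.
Qed.

Section Comparability.
Variables (X Y : Type) (A : X -> Prop) (B : Y -> Prop).

Definition pinj := {R : X -> Y -> Prop | partial_injection A B R}.

Definition pinj_le (R R' : pinj) : Prop :=
  forall x y, proj1_sig R x y -> proj1_sig R' x y.

Lemma pinj_chain_union (C : pinj -> Prop) :
  (forall R R', C R -> C R' -> pinj_le R R' \/ pinj_le R' R) ->
  partial_injection A B (fun x y => exists R, C R /\ proj1_sig R x y).
Proof.
  intros Hchain.
  assert (common := chain_common_upper pinj_le C (fun R x y H => H) Hchain).
  split.
  - intros x y [R [_ HR]]. exact (pinj_sub (proj2_sig R) x y HR).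
  - intros x y y' [R [CR HR]] [R' [CR' HR']].
    destruct (common R R' CR CR') as (S & _ & HRS & HR'S).
    exact (pinj_fun (proj2_sig S) x y y' (HRS _ _ HR) (HR'S _ _ HR')).
  - intros x x' y [R [CR HR]] [R' [CR' HR']].
    destruct (common R R' CR CR') as (S & _ & HRS & HR'S).
    exact (pinj_inj (proj2_sig S) x x' y (HRS _ _ HR) (HR'S _ _ HR')).
Qed.

Lemma embeds_on_comparable (x0 : X) (y0 : Y) :
  (exists f, embeds_on A B f) \/ (exists f, embeds_on B A f).
Proof.
  assert (empty : partial_injection A B (fun _ _ => False)) by (split; tauto).
  destruct (zorn_nonempty_chains (exist _ _ empty) pinj_le) as [[R HR] Rmax].
  - intros R x y H; exact H.
  - intros R R' R'' H H' x y Hxy; auto.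
  - intros C _ Hchain.
    exists (exist _ _ (pinj_chain_union C Hchain)).
    intros R CR x y Hxy. exists R; auto.
  - simpl in Rmax.
    destruct (classic (forall x, A x -> exists y, R x y)) as [Htot|Hpart].
    + left. exact (partial_injection_onto y0 (partial_injection_flip HR) Htot).
    + right. apply (partial_injection_onto x0 HR).
      apply not_all_ex_not in Hpart. destruct Hpart as [a Ha].
      apply imply_to_and in Ha. destruct Ha as [Aa Hfree].
      intros b Bb. apply NNPP; intros Hb.
      assert (HR' : partial_injection A B (fun x y => R x y \/ (x = a /\ y = b))).
      { split.
        - intros x y [Hxy|[-> ->]]; [exact (pinj_sub HR x y Hxy)|auto].
        - intros x y y' [H|[-> ->]] [H'|[Ex ->]]; [exact (pinj_fun HR _ _ _ H H')| | |reflexivity];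
            exfalso; apply Hfree; subst; eauto.
        - intros x x' y [H|[-> ->]] [H'|[-> Ey]]; [exact (pinj_inj HR _ _ _ H H')| | |reflexivity];
            exfalso; apply Hb; subst; eauto. }
      apply Hfree. exists b.
      apply (Rmax (exist _ _ HR')); [intros x y Hxy; left; exact Hxy|]. right; auto.
Qed.
End Comparability.

(** * mu * mu = mu *)

Definition embeds (X Y : Type) : Prop := exists f : X -> Y, Injective f.

Section Pairing.
Variables (M : Type) (g : nat -> M).
Hypothesis g_inj : Injective g.

Definition square (A : M -> Prop) (p : M * M) : Prop := A (fst p) /\ A (snd p).

Definition pairing_on (A : M -> Prop) (h : M * M -> M) : Prop := embeds_on (square A) A h.

(* Graphs, unlike functions [M * M -> M], can be united along a chain. *)
Record pairing_graph (A : M -> Prop) (G : M * M -> M -> Prop) : Prop := {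
  pg_sub : forall p c, G p c -> square A p /\ A c;
  pg_total : forall p, square A p -> exists c, G p c;
  pg_fun : forall p c c', G p c -> G p c' -> c = c';
  pg_inj : forall p p' c, G p c -> G p' c -> p = p' }.

Definition graph_on (A : M -> Prop) (h : M * M -> M) (p : M * M) (c : M) : Prop :=
  square A p /\ c = h p.

Lemma pairing_graph_of_pairing_on A h : pairing_on A h -> pairing_graph A (graph_on A h).
Proof.
  intros [Hmap Hinj]; split.
  - intros p c [Hp ->]; auto.
  - intros p Hp; exists (h p); split; auto.
  - intros p c c' [_ ->] [_ ->]; reflexivity.
  - intros p p' c [Hp ->] [Hp' E]; apply Hinj; auto.
Qed.

Lemma pairing_on_of_pairing_graph A G : pairing_graph A G ->
  exists h, pairing_on A h /\ forall p c, G p c <-> graph_on A h p c.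
Proof.
  intros HG.
  pose (h := fun p => epsilon (inhabits (fst p)) (G p)).
  assert (Hh : forall p, square A p -> G p (h p))
    by (intros p Hp; apply epsilon_spec, (pg_total HG), Hp).
  exists h; split; [split|].
  - intros p Hp. exact (proj2 (pg_sub HG _ _ (Hh p Hp))).
  - intros p p' Hp Hp' E. apply (pg_inj HG p p' (h p)); [apply Hh, Hp|]. rewrite E. apply Hh, Hp'.
  - intros p c; split.
    + intros Hpc. pose proof (proj1 (pg_sub HG _ _ Hpc)) as Hp.
      split; [exact Hp|]. exact (pg_fun HG _ _ _ Hpc (Hh p Hp)).
    + intros [Hp ->]. apply Hh, Hp.
Qed.

Definition nat_range (x : M) : Prop := exists n, g n = x.

Definition nat_pairing_graph (p : M * M) (c : M) : Prop :=
  exists n m, p = (g n, g m) /\ c = g (to_nat (n, m)).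

Lemma nat_pairing_graph_spec : pairing_graph nat_range nat_pairing_graph.
Proof.
  split.
  - intros p c (n & m & -> & ->). split; [split|]; eexists; reflexivity.
  - intros [a b] [[n En] [m Em]]. simpl in En, Em. subst. exists (g (to_nat (n, m))), n, m. auto.
  - intros p c c' (n & m & -> & ->) (n' & m' & E & ->).
    injection E as En Em. apply g_inj in En, Em. subst. reflexivity.
  - intros p p' c (n & m & -> & ->) (n' & m' & -> & E).
    apply g_inj, to_nat_inj in E. injection E as -> ->. reflexivity.
Qed.

Definition pairing_ext :=
  {AG : (M -> Prop) * (M * M -> M -> Prop) |
    pairing_graph (fst AG) (snd AG) /\ forall n, fst AG (g n)}.

Definition pairing_ext_le (X Y : pairing_ext) : Prop :=
  (forall x, fst (proj1_sig X) x -> fst (proj1_sig Y) x) /\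
  (forall p c, snd (proj1_sig X) p c -> snd (proj1_sig Y) p c).

Lemma pairing_ext_chain_bound (C : pairing_ext -> Prop) (X0 : pairing_ext) : C X0 ->
  (forall X Y, C X -> C Y -> pairing_ext_le X Y \/ pairing_ext_le Y X) ->
  exists U, forall X, C X -> pairing_ext_le X U.
Proof.
  intros CX0 Hchain.
  assert (common := chain_common_upper pairing_ext_le C
                      (fun X => conj (fun x H => H) (fun p c H => H)) Hchain).
  pose (UA := fun x => exists X, C X /\ fst (proj1_sig X) x).
  pose (UG := fun p c => exists X, C X /\ snd (proj1_sig X) p c).
  assert (HU : pairing_graph UA UG).
  { split.
    - intros p c [X [CX HX]]. destruct (pg_sub (proj1 (proj2_sig X)) _ _ HX) as [[H1 H2] H3].
      split; [split|]; exists X; auto.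
    - intros p [[X [CX HX]] [Y [CY HY]]].
      destruct (common X Y CX CY) as (Z & CZ & [HXZ _] & [HYZ _]).
      destruct (pg_total (proj1 (proj2_sig Z)) (conj (HXZ _ HX) (HYZ _ HY))) as [c Hc].
      exists c, Z; auto.
    - intros p c c' [X [CX HX]] [Y [CY HY]].
      destruct (common X Y CX CY) as (Z & CZ & [_ HXZ] & [_ HYZ]).
      exact (pg_fun (proj1 (proj2_sig Z)) _ _ _ (HXZ _ _ HX) (HYZ _ _ HY)).
    - intros p p' c [X [CX HX]] [Y [CY HY]].
      destruct (common X Y CX CY) as (Z & CZ & [_ HXZ] & [_ HYZ]).
      exact (pg_inj (proj1 (proj2_sig Z)) _ _ _ (HXZ _ _ HX) (HYZ _ _ HY)). }
  assert (UA_g : forall n, UA (g n))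
    by (intros n; exists X0; split; [exact CX0|apply (proj2_sig X0)]).
  exists (exist _ (UA, UG) (conj HU UA_g)).
  intros X CX; split; intros; [exists X|exists X]; auto.
Qed.

Lemma maximal_pairing : exists A h, pairing_on A h /\ (forall n, A (g n)) /\
  forall A' h', pairing_on A' h' -> (forall x, A x -> A' x) ->
    (forall p, square A p -> h' p = h p) -> forall x, A' x -> A x.
Proof.
  assert (X0 : pairing_ext).
  { exists (nat_range, nat_pairing_graph).
    split; [exact nat_pairing_graph_spec|intros n; exists n; reflexivity]. }
  destruct (zorn_nonempty_chains X0 pairing_ext_le) as [[[A G] [HG A_g]] Hmax].
  - intros X; split; auto.
  - intros X Y Z [H1 H2] [H3 H4]; split; auto.
  - intros C [Y CY] Hchain. exact (pairing_ext_chain_bound C Y CY Hchain).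
  - simpl in *. destruct (pairing_on_of_pairing_graph HG) as [h [Hh HGh]].
    exists A, h. split; [exact Hh|split; [exact A_g|]].
    intros A' h' Hh' HAA' Hhh'.
    pose (HA' := conj (pairing_graph_of_pairing_on Hh') (fun n => HAA' _ (A_g n))).
    refine (proj1 (Hmax (exist _ (A', graph_on A' h') HA') _)).
    split; [exact HAA'|]. simpl. intros p c Hpc.
    apply HGh in Hpc. destruct Hpc as [Hp ->].
    split; [destruct Hp; split; auto|]. symmetry; apply Hhh', Hp.
Qed.

Section Extension.
Variables (A : M -> Prop) (h : M * M -> M).
Hypotheses (h_pairing : pairing_on A h) (A_g : forall n, A (g n)).

Definition tag_into (psi : M -> M) (x : M) : M :=
  if excluded_middle_informative (A x) then h (g 0, x) else h (g 1, psi x).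

Lemma tag_into_embeds (C : M -> Prop) (psi : M -> M) : embeds_on C A psi ->
  embeds_on (fun x => A x \/ C x) A (tag_into psi).
Proof.
  intros [psi_map psi_inj]. destruct h_pairing as [h_map h_inj].
  unfold tag_into; split.
  - intros x Hx. destruct (excluded_middle_informative (A x)) as [Ax|Ax];
      apply h_map; split; simpl; auto.
    apply psi_map. destruct Hx; tauto.
  - intros x x' Hx Hx' E.
    assert (psi_in : forall y, A y \/ C y -> ~ A y -> A (psi y))
      by (intros y [] ?; [contradiction|auto]).
    destruct (excluded_middle_informative (A x)) as [Ax|Ax],
             (excluded_middle_informative (A x')) as [Ax'|Ax'].
    + exact (f_equal snd (h_inj (g 0, x) (g 0, x') (conj (A_g 0) Ax) (conj (A_g 0) Ax') E)).
    + pose proof (f_equal fst (h_inj (g 0, x) (g 1, psi x') (conj (A_g 0) Ax)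
                                 (conj (A_g 1) (psi_in x' Hx' Ax')) E)) as E1.
      apply g_inj in E1; discriminate.
    + pose proof (f_equal fst (h_inj (g 1, psi x) (g 0, x') (conj (A_g 1) (psi_in x Hx Ax))
                                 (conj (A_g 0) Ax') E)) as E1.
      apply g_inj in E1; discriminate.
    + apply psi_inj; [destruct Hx; tauto|destruct Hx'; tauto|].
      exact (f_equal snd (h_inj (g 1, psi x) (g 1, psi x') (conj (A_g 1) (psi_in x Hx Ax))
                                 (conj (A_g 1) (psi_in x' Hx' Ax')) E)).
Qed.

Variable phi : M -> M.
Hypothesis phi_embeds : embeds_on A (fun x => ~ A x) phi.

Definition phi_image (x : M) : Prop := exists a, A a /\ phi a = x.

Definition phi_inv (x : M) : M := epsilon (inhabits x) (fun a => A a /\ phi a = x).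

Lemma phi_inv_embeds : embeds_on phi_image A phi_inv.
Proof.
  assert (Hinv : forall x, phi_image x -> A (phi_inv x) /\ phi (phi_inv x) = x)
    by (intros x Hx; unfold phi_inv; apply epsilon_spec, Hx).
  split.
  - intros x Hx; apply Hinv, Hx.
  - intros x x' Hx Hx' E.
    rewrite <- (proj2 (Hinv x Hx)), <- (proj2 (Hinv x' Hx')), E. reflexivity.
Qed.

Definition ext_dom (x : M) : Prop := A x \/ phi_image x.

(* A new pair is coded in [A] through [tag_into phi_inv : ext_dom -> A], then moved by [phi]
   outside [A], where no old pair is sent. *)
Definition ext_pairing (p : M * M) : M :=
  if excluded_middle_informative (square A p) then h p
  else phi (h (tag_into phi_inv (fst p), tag_into phi_inv (snd p))).

Lemma ext_pairing_on : pairing_on ext_dom ext_pairing.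
Proof.
  destruct h_pairing as [h_map h_inj], phi_embeds as [phi_out phi_inj].
  destruct (tag_into_embeds phi_inv_embeds) as [t_map t_inj].
  assert (new_sq : forall p, square ext_dom p ->
            square A (tag_into phi_inv (fst p), tag_into phi_inv (snd p)))
    by (intros p [H1 H2]; split; apply t_map; auto).
  unfold ext_pairing; split.
  - intros p Hp. destruct (excluded_middle_informative (square A p)) as [Hsq|Hsq].
    + left; apply h_map, Hsq.
    + right; eexists; split; [apply h_map, new_sq, Hp|reflexivity].
  - intros p p' Hp Hp' E.
    destruct (excluded_middle_informative (square A p)) as [Hsq|Hsq],
             (excluded_middle_informative (square A p')) as [Hsq'|Hsq'].
    + apply h_inj; auto.
    + exfalso. apply (phi_out _ (h_map _ (new_sq p' Hp'))). rewrite <- E. apply h_map, Hsq.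
    + exfalso. apply (phi_out _ (h_map _ (new_sq p Hp))). rewrite E. apply h_map, Hsq'.
    + apply phi_inj, h_inj in E; try apply h_map; try apply new_sq; auto.
      destruct p as [a b], p' as [a' b'], Hp, Hp'.
      injection E; intros Eb Ea. f_equal; apply t_inj; auto.
Qed.
End Extension.

Lemma embeds_square : embeds (M * M) M.
Proof.
  destruct maximal_pairing as (A & h & Hh & A_g & Hmax).
  destruct (embeds_on_comparable A (fun x => ~ A x) (g 0) (g 0)) as [[phi Hphi]|[psi Hpsi]].
  - exfalso. apply (proj1 Hphi (g 0) (A_g 0)).
    apply (Hmax _ _ (ext_pairing_on Hh A_g Hphi)).
    + intros x Ax; left; exact Ax.
    + intros p Hp. unfold ext_pairing.
      destruct (excluded_middle_informative (square A p)); tauto.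
    + right. exists (g 0). split; [apply A_g|reflexivity].
  - destruct (tag_into_embeds Hh A_g Hpsi) as [e_map e_inj], Hh as [_ h_inj].
    pose (e := tag_into A h psi).
    assert (e_sq : forall p : M * M, square A (e (fst p), e (snd p)))
      by (intros p; split; apply e_map, classic).
    exists (fun p => h (e (fst p), e (snd p))).
    intros [a b] [a' b'] E. apply h_inj in E; [|apply e_sq..].
    injection E; intros Eb Ea. f_equal; apply e_inj; auto using classic.
Qed.
End Pairing.

(** * Coding in M *)

Lemma embeds_refl (X : Type) : embeds X X.
Proof. exists (fun x => x); intros x y E; exact E. Qed.

Lemma embeds_trans (X Y Z : Type) : embeds X Y -> embeds Y Z -> embeds X Z.
Proof. intros [f Hf] [f' Hf']. exists (fun x => f' (f x)). intros x y E. auto. Qed.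

Lemma embeds_prod_mono (X X' Y Y' : Type) :
  embeds X X' -> embeds Y Y' -> embeds (X * Y) (X' * Y').
Proof.
  intros [f Hf] [f' Hf']. exists (fun p => (f (fst p), f' (snd p))).
  intros [x y] [x' y'] E. injection E as Ex Ey. f_equal; auto.
Qed.

Lemma embeds_surjection (Z M : Type) (z0 : Z) :
  embeds Z M -> exists d : M -> Z, forall z, exists m, d m = z.
Proof.
  intros [c Hc]. exists (fun m => epsilon (inhabits z0) (fun z => c z = m)).
  intros z. exists (c z). apply Hc, (epsilon_spec (inhabits z0) (fun z' => c z' = c z)). eauto.
Qed.

Section Coding.
Variable M : Type.
Hypotheses (nat_M : embeds nat M) (square_M : embeds (M * M) M).

Lemma embeds_prod (X Y : Type) : embeds X M -> embeds Y M -> embeds (X * Y) M.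
Proof. intros HX HY. exact (embeds_trans (embeds_prod_mono HX HY) square_M). Qed.

Lemma embeds_bool : embeds bool M.
Proof.
  apply (embeds_trans (Y := nat)); [|exact nat_M].
  exists (fun b : bool => if b then 1 else 0). intros [] [] E; easy.
Qed.

Lemma embeds_list (X : Type) : embeds X M -> embeds (list X) M.
Proof.
  intros [c Hc]. destruct nat_M as [g g_inj], square_M as [pi pi_inj].
  exists (fix code l := match l with
                        | nil => pi (g 0, g 0)
                        | x :: l => pi (g 1, pi (c x, code l))
                        end).
  intros l; induction l as [|x l IH]; intros [|y l'] E; apply pi_inj in E.
  - reflexivity.
  - injection E as E1 _. apply g_inj in E1. discriminate.
  - injection E as E1 _. apply g_inj in E1. discriminate.
  - injection E as E. apply pi_inj in E. injection E as Ex El. f_equal; auto.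
Qed.
End Coding.

Lemma mu_Fr_linked_of_embeds (J M : Type) (P : forcing) :
  embeds J M -> mu_Fr_linked J P -> mu_Fr_linked M P.
Proof.
  intros [c Hc] [F [Flink Fcov]].
  exists (fun z p => exists j, c j = z /\ F j p). split.
  - intros z pbar Hp. destruct (Hp 0) as [j [<- _]]. apply (Flink j).
    intros n. destruct (Hp n) as [j' [E Hj']]. apply Hc in E. subst. exact Hj'.
  - intros p. destruct (Fcov p) as [j Hj]. exists (c j), j. auto.
Qed.

Section Interpolation.
Variables (I M : Type) (m0 : M) (f : I -> M -> bool).
Hypothesis f_inj : Injective f.

Lemma separating_points (u : list I) :
  exists D : list M, forall i j, In i u -> In j u -> map (f i) D = map (f j) D -> i = j.
Proof.
  assert (Hsep : forall ij : I * I, exists m, fst ij <> snd ij -> f (fst ij) m <> f (snd ij) m).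
  { intros [i j]. destruct (classic (i = j)) as [Eij|Nij]; [exists m0; tauto|].
    apply NNPP; intros Hno. apply Nij, f_inj, functional_extensionality. intros m.
    apply NNPP; intros Hm. apply Hno. exists m. auto. }
  destruct (choice _ Hsep) as [sep Hsep'].
  exists (flat_map (fun i => map (fun j => sep (i, j)) u) u).
  intros i j Hi Hj E. apply NNPP; intros Nij.
  apply (Hsep' (i, j) Nij). apply (proj1 map_ext_in_iff E).
  apply in_flat_map. exists i. split; [exact Hi|]. apply (in_map (fun j => sep (i, j)) u j Hj).
Qed.

Definition lookup (t : list (list bool * M)) (key : list bool) : M :=
  match find (fun e => if list_eq_dec Bool.bool_dec (fst e) key then true else false) t with
  | Some e => snd e
  | None => m0
  end.

Definition interpolant (z : list M * list (list bool * M)) (i : I) : M :=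
  lookup (snd z) (map (f i) (fst z)).

Lemma interpolant_spec (u : list I) (s : I -> M) :
  exists z, forall i, In i u -> interpolant z i = s i.
Proof.
  destruct (separating_points u) as [D HD].
  exists (D, map (fun j => (map (f j) D, s j)) u). intros i Hi.
  unfold interpolant, lookup; simpl.
  destruct (find _ _) as [e|] eqn:Hfind.
  - apply find_some in Hfind. destruct Hfind as [He Hkey].
    apply in_map_iff in He. destruct He as [j [<- Hj]]. simpl in Hkey.
    destruct (list_eq_dec Bool.bool_dec (map (f j) D) (map (f i) D)) as [Ekey|]; [|discriminate].
    simpl. f_equal. exact (HD j i Hj Hi Ekey).
  - exfalso.
    pose proof (find_none _ _ Hfind _ (in_map (fun j => (map (f j) D, s j)) u i Hi)) as Hnone.
    simpl in Hnone.
    destruct (list_eq_dec Bool.bool_dec (map (f i) D) (map (f i) D)); [discriminate|contradiction].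
Qed.

Lemma interpolating_family : embeds (list M * list (list bool * M)) M ->
  exists h : M -> I -> M,
    forall (u : list I) (s : I -> M), exists z, forall i, In i u -> h z i = s i.
Proof.
  intros Hcode. destruct (embeds_surjection (nil, nil) Hcode) as [d Hd].
  exists (fun m => interpolant (d m)). intros u s.
  destruct (interpolant_spec u s) as [z Hz], (Hd z) as [m <-].
  exists m; exact Hz.
Qed.
End Interpolation.

(** * Delta-systems *)

Section DeltaSystem.
Variable X : Type.

Definition delta_system (l : nat -> list X) (r : list X) : Prop :=
  (forall n x, In x r -> In x (l n)) /\
  (forall n n' x, n <> n' -> In x (l n) -> In x (l n') -> In x r).

Lemma in_list_max (xs : list nat) (x : nat) : In x xs -> x <= list_max xs.
Proof.
  intros Hx. apply (proj1 (Forall_forall _ xs) (proj1 (list_max_le xs _) (Nat.le_refl _)) x Hx).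
Qed.

Lemma disjoint_subsequence (l : nat -> list X) :
  (forall x, exists N, forall n, N <= n -> ~ In x (l n)) ->
  exists s, (forall n, n <= s n) /\ delta_system (fun n => l (s n)) nil.
Proof.
  intros Hrare. destruct (choice _ Hrare) as [b Hb].
  pose (B := fun N => list_max (map b (flat_map l (seq 0 (S N))))).
  assert (HB : forall N n x, n <= N -> In x (l n) -> b x <= B N).
  { intros N n x HnN Hx. apply in_list_max, in_map, in_flat_map.
    exists n. split; [apply in_seq; lia|exact Hx]. }
  (* each term is chosen beyond the last occurrence of every point of the earlier terms *)
  pose (s := fun n => Nat.iter n (fun m => S (m + B m)) 0).
  assert (s_succ : forall n, s (S n) = S (s n + B (s n))) by reflexivity.
  assert (s_mono : forall j n, j <= n -> s j <= s n)
    by (intros j n Hjn; induction Hjn; [lia|rewrite s_succ; lia]).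
  assert (Hfresh : forall j n x, j < n -> In x (l (s j)) -> ~ In x (l (s n))).
  { intros j [|n] x Hjn Hx; [lia|]. apply Hb. rewrite s_succ.
    pose proof (HB (s n) (s j) x (s_mono j n ltac:(lia)) Hx). lia. }
  exists s. split; [intros n; induction n; [lia|rewrite s_succ; lia]|].
  split; [intros n x []|]. intros n n' x Hnn' Hx Hx'.
  destruct (Nat.lt_total n n') as [Hlt|[Heq|Hgt]];
    [destruct (Hfresh n n' x Hlt Hx Hx')|contradiction|destruct (Hfresh n' n x Hgt Hx' Hx)].
Qed.

Lemma delta_subsequence (k : nat) (l : nat -> list X) :
  (forall n, length (l n) <= k) ->
  exists s r, (forall n, n <= s n) /\ delta_system (fun n => l (s n)) r.
Proof.
  revert l; induction k as [|k IH]; intros l Hl.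
  - destruct (disjoint_subsequence l) as [s Hs]; [|exists s, nil; exact Hs].
    intros x; exists 0; intros n _ Hx.
    specialize (Hl n). destruct (l n); [exact Hx|simpl in Hl; lia].
  - destruct (classic (exists x, forall N, exists n, N <= n /\ In x (l n))) as [[x Hx]|Hrare].
    + destruct (choice _ Hx) as [tau Htau].
      pose (eqdec := fun a b : X => excluded_middle_informative (a = b)).
      destruct (IH (fun n => remove eqdec x (l (tau n)))) as (s & r & Hs & Hroot & Hdisj).
      { intros n. pose proof (remove_length_lt eqdec (l (tau n)) x (proj2 (Htau n))).
        specialize (Hl (tau n)). lia. }
      exists (fun n => tau (s n)), (x :: r). split; [|split].
      * intros n. specialize (Hs n). specialize (Htau (s n)). lia.
      * intros n y [<-|Hy]; [apply Htau|]. exact (proj1 (in_remove eqdec _ _ _ (Hroot n y Hy))).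
      * intros n n' y Hnn' Hy Hy'. destruct (eqdec y x) as [->|Hyx]; [left; reflexivity|right].
        apply (Hdisj n n'); auto; apply in_in_remove; auto.
    + destruct (disjoint_subsequence l) as [s Hs]; [|exists s, nil; exact Hs].
      intros x. apply NNPP; intros Hx. apply Hrare. exists x. intros N.
      apply NNPP; intros HN. apply Hx. exists N. intros n Hn Hin. apply HN. eauto.
Qed.

Lemma delta_system_eventually_in_root (l : nat -> list X) (r : list X) :
  delta_system l r -> forall L : list X,
  exists b, forall n, b <= n -> forall x, In x L -> In x (l n) -> In x r.
Proof.
  intros [_ Hdisj] L. induction L as [|x L [b IH]].
  - exists 0. intros n _ x [].
  - assert (Hx : exists bx, forall n, bx <= n -> In x (l n) -> In x r).
    { destruct (classic (exists n0, In x (l n0) /\ ~ In x r)) as [[n0 [Hn0 Hr]]|Hnone].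
      - exists (S n0). intros n Hn Hin. apply (Hdisj n n0); auto. lia.
      - exists 0. intros n _ Hin. apply NNPP; intros Hr. apply Hnone; eauto. }
    destruct Hx as [bx Hbx]. exists (max b bx).
    intros n Hn y [<-|Hy] Hin; [apply (Hbx n)|apply (IH n)]; auto; lia.
Qed.
End DeltaSystem.

(** * Finite support products *)

Section FiniteSupportProduct.
Variables (I : Type) (Q : I -> forcing).

Definition supp (p : fs_prod Q) (i : I) : Prop := proj1_sig p i <> ftop (Q i).

Lemma not_supp_le (p : fs_prod Q) (i : I) (x : Q i) : ~ supp p i -> fle x (proj1_sig p i).
Proof. intros Hi. apply NNPP in Hi. rewrite Hi. apply fle_top. Qed.

Definition patch_fun (l : list I) (p p' : fs_prod Q) (i : I) : Q i :=
  if excluded_middle_informative (In i l) then proj1_sig p i else proj1_sig p' i.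

Lemma patch_fin (l : list I) (p p' : fs_prod Q) :
  finite_sub (fun i => patch_fun l p p' i <> ftop (Q i)).
Proof.
  destruct (proj2_sig p) as [L HL], (proj2_sig p') as [L' HL'].
  exists (L ++ L'). intros i Hi. apply in_or_app. unfold patch_fun in Hi.
  destruct (excluded_middle_informative (In i l)); auto.
Qed.

Definition patch (l : list I) (p p' : fs_prod Q) : fs_prod Q :=
  exist _ (patch_fun l p p') (patch_fin l p p').

Lemma patch_in (l : list I) (p p' : fs_prod Q) (i : I) :
  In i l -> proj1_sig (patch l p p') i = proj1_sig p i.
Proof.
  intros Hi. simpl. unfold patch_fun.
  destruct (excluded_middle_informative (In i l)); [reflexivity|contradiction].
Qed.

Lemma patch_out (l : list I) (p p' : fs_prod Q) (i : I) :
  ~ In i l -> proj1_sig (patch l p p') i = proj1_sig p' i.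
Proof.
  intros Hi. simpl. unfold patch_fun.
  destruct (excluded_middle_informative (In i l)); [contradiction|reflexivity].
Qed.

Lemma patch_le (l : list I) (p p' t : fs_prod Q) :
  (forall i, In i l -> fle (proj1_sig p i) (proj1_sig t i)) ->
  (forall i, ~ In i l -> fle (proj1_sig p' i) (proj1_sig t i)) ->
  fle (patch l p p') t.
Proof.
  intros Hin Hout i. destruct (classic (In i l)) as [Hi|Hi].
  - rewrite patch_in by exact Hi. auto.
  - rewrite patch_out by exact Hi. auto.
Qed.

Variable r : list I.

Definition subprod : forcing := fs_prod (fun j : {i : I | In i r} => Q (proj1_sig j)).

Lemma finite_sub_In_subtype (A : {i : I | In i r} -> Prop) : finite_sub A.
Proof.
  exists (flat_map (fun i => match excluded_middle_informative (In i r) with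
                            | left h => exist _ i h :: nil
                            | right _ => nil
                            end) r).
  intros [i h] _. apply in_flat_map. exists i. split; [exact h|].
  destruct (excluded_middle_informative (In i r)) as [h'|]; [|contradiction].
  left. f_equal. apply proof_irrelevance.
Qed.

Definition fsp_restrict (p : fs_prod Q) : subprod :=
  exist _ (fun j => proj1_sig p (proj1_sig j)) (finite_sub_In_subtype _).

Definition fsp_extend_fun (q : subprod) (i : I) : Q i :=
  match excluded_middle_informative (In i r) with
  | left h => proj1_sig q (exist _ i h)
  | right _ => ftop (Q i)
  end.

Lemma fsp_extend_fin (q : subprod) : finite_sub (fun i => fsp_extend_fun q i <> ftop (Q i)).
Proof.
  exists r. intros i. unfold fsp_extend_fun.
  destruct (excluded_middle_informative (In i r)); tauto.
Qed.

Definition fsp_extend (q : subprod) : fs_prod Q := exist _ (fsp_extend_fun q) (fsp_extend_fin q).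

Lemma fsp_extend_val (q : subprod) (i : I) (h : In i r) :
  proj1_sig (fsp_extend q) i = proj1_sig q (exist _ i h).
Proof.
  simpl. unfold fsp_extend_fun.
  destruct (excluded_middle_informative (In i r)) as [h'|]; [|contradiction].
  rewrite (proof_irrelevance _ h' h). reflexivity.
Qed.

Lemma fsp_restrict_le (p : fs_prod Q) (q : subprod) :
  fle p (fsp_extend q) -> fle (fsp_restrict p) q.
Proof. intros Hpq [i h]. simpl. rewrite <- (fsp_extend_val q i h). apply Hpq. Qed.
End FiniteSupportProduct.

Arguments fsp_extend {I Q} r q.

Section Boxes.
Variables (I M : Type) (Q : I -> forcing) (Qs : forall i : I, M -> Q i -> Prop).

Definition bounded_box (k : nat) (h : I -> M) (p : fs_prod Q) : Prop :=
  exists l : list I, length l <= k /\ (forall i, supp p i -> In i l) /\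
    (forall i, In i l -> Qs i (h i) (proj1_sig p i)).

Lemma bounded_box_cover (H : M -> I -> M) :
  (forall (i : I) (p : Q i), exists z : M, Qs i z p) ->
  (forall (u : list I) (s : I -> M), exists z, forall i, In i u -> H z i = s i) ->
  forall p : fs_prod Q, exists k z, bounded_box k (H z) p.
Proof.
  intros Hcov Hinterp p. destruct (proj2_sig p) as [L HL].
  destruct (choice _ (fun i => Hcov i (proj1_sig p i))) as [c Hc].
  destruct (Hinterp L c) as [z Hz].
  exists (length L), z, L. split; [reflexivity|split; [exact HL|]].
  intros i Hi. rewrite Hz; auto.
Qed.

Hypothesis Hprod : forall u : I -> Prop, finite_sub u ->
  forall s : {i : I | u i} -> M,
    Fr_linked (P := fs_prod (fun j : {i : I | u i} => Q (proj1_sig j)))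
      (fun f => forall j, Qs (proj1_sig j) (s j) (proj1_sig f j)).

Lemma bounded_box_Fr_linked (k : nat) (h : I -> M) : Fr_linked (bounded_box k h).
Proof.
  intros pbar Hbox. destruct (choice _ Hbox) as [l Hl].
  destruct (delta_subsequence l (fun n => proj1 (Hl n))) as (s & r & Hs & Hdelta).
  pose (pr := fun n => fsp_restrict r (pbar (s n))).
  destruct (@Hprod (fun i => In i r) (ex_intro _ r (fun i Hi => Hi)) (fun j => h (proj1_sig j)) pr)
    as [q Hq].
  { intros n [i Hi]. apply (Hl (s n)), (proj1 Hdelta n i Hi). }
  exists (fsp_extend r q). intros m t Ht.
  destruct (proj2_sig t) as [L HL].
  destruct (delta_system_eventually_in_root Hdelta L) as [b Hb].
  destruct (Hq (max m b) (fsp_restrict r t) (fsp_restrict_le Ht)) as (n & t' & Hn & Ht't & Ht'p).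
  assert (t_top : forall i, ~ In i r -> In i (l (s n)) -> ~ supp t i)
    by (intros i Hir Hil Hit; apply Hir, (Hb n ltac:(lia)); auto).
  assert (p_top : forall i, ~ In i (l (s n)) -> ~ supp (pbar (s n)) i)
    by (intros i Hil Hip; apply Hil, (Hl (s n)), Hip).
  (* amalgamate: [t'] on the root, [pbar (s n)] on the rest of its support, [t] elsewhere *)
  exists (s n), (patch r (fsp_extend r t') (patch (l (s n)) (pbar (s n)) t)).
  split; [specialize (Hs n); lia|split].
  - apply patch_le.
    + intros i Hi. rewrite (fsp_extend_val t' i Hi). exact (Ht't (exist _ i Hi)).
    + intros i Hi. destruct (classic (In i (l (s n)))) as [Hil|Hil].
      * rewrite patch_in by exact Hil. apply not_supp_le; auto.
      * rewrite patch_out by exact Hil. apply fle_refl.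
  - apply patch_le.
    + intros i Hi. rewrite (fsp_extend_val t' i Hi). exact (Ht'p (exist _ i Hi)).
    + intros i Hi. destruct (classic (In i (l (s n)))) as [Hil|Hil].
      * rewrite patch_in by exact Hil. apply fle_refl.
      * rewrite patch_out by exact Hil. apply not_supp_le; auto.
Qed.
End Boxes.

Theorem theorem3p22
  (M I : Type) (Q : I -> forcing)
  (Qs : forall i : I, M -> Q i -> Prop)
  (Hmu : exists g : nat -> M, forall a b, g a = g b -> a = b)
  (Hcov : forall (i : I) (p : Q i), exists z : M, Qs i z p)
  (Hlink : forall (i : I) (z : M), Fr_linked (Qs i z))
  (HI : exists f : I -> M -> bool, forall a b, f a = f b -> a = b)
  (Hprod : forall u : I -> Prop, finite_sub u ->
     forall s : {i : I | u i} -> M,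
       Fr_linked (P := fs_prod (fun j : {i : I | u i} => Q (proj1_sig j)))
         (fun f => forall j, Qs (proj1_sig j) (s j) (proj1_sig f j))) :
  mu_Fr_linked M (fs_prod Q).
Proof.
  (* [Hlink] is not needed: it is the case of [Hprod] where [u] is a singleton. *)
  destruct Hmu as [g g_inj], HI as [f f_inj].
  assert (nat_M : embeds nat M) by (exists g; exact g_inj).
  assert (square_M : embeds (M * M) M) by exact (embeds_square g_inj).
  pose proof (embeds_list nat_M square_M) as list_M.
  pose proof (embeds_prod square_M) as prod_M.
  pose proof (embeds_refl M) as M_M.
  destruct (interpolating_family (g 0) f_inj) as [H HH].
  { apply prod_M; apply list_M; [exact M_M|].
    apply prod_M; [apply list_M, embeds_bool, nat_M|exact M_M]. }
  apply (mu_Fr_linked_of_embeds (prod_M _ _ nat_M M_M)).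
  exists (fun kz => bounded_box Qs (fst kz) (H (snd kz))). split.
  - intros [k z]. apply bounded_box_Fr_linked, Hprod.
  - intros p. destruct (bounded_box_cover Qs H Hcov HH p) as (k & z & Hp). exists (k, z). exact Hp.
Qed.
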